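(* Let $n\ge2$ and let $\varphi$ be a skew morphism of $\mathbb{Z}_n$ with even complexity and auto-order $m$. Then $m$ divides $n$, and $\varphi$ taken modulo $m$ is the trivial permutation of $\mathbb{Z}_m$, i.e. $\varphi(x)\equiv x\pmod m$ for all $x\in\mathbb{Z}_n$.
   Context: $\mathbb{Z}_n$ is the cyclic group of integers modulo $n$. A skew morphism of a finite group $G$ is a permutation $\varphi$ of $G$ fixing the identity such that for each $a\in G$ there is a non-negative integer $i_a$ with $\varphi(ab)=\varphi(a)\varphi^{i_a}(b)$ for all $b\in G$. ${\rm ord}(\varphi)$ is the order of $\langle\varphi\rangle$. If $\varphi$ is non-trivial, $\pi_\varphi(a)$ is the unique such $i_a\in\{1,\dots,{\rm ord}(\varphi)-1\}$; if $\varphi$ is the identity, $\pi_\varphi(a)=1$. Let $\sigma_\varphi(x,y)=\sum_{i=0}^{x-1}\pi_\varphi(\varphi^i(y))\in\mathbb{Z}_{{\rm ord}(\varphi)}$. For a skew morphism $\varphi$ of $\mathbb{Z}_n$, the derived skew morphism $\varphi'$ is the skew morphism of $\mathbb{Z}_{{\rm ord}(\varphi)}$ given by $\varphi'(a)=\sigma_\varphi(a,1)$. Set $\varphi^{(0)}=\varphi$, $\varphi^{(i+1)}=(\varphi^{(i)})'$. For $n\ge2$ the complexity of $\varphi$ is the unique non-negative integer $c$ such that $\varphi^{(c)}$ is a skew morphism of a non-trivial cyclic group $\mathbb{Z}_m$ and $\varphi^{(c+1)}$ is a skew morphism of $\mathbb{Z}_1$; then $\varphi^{(c)}$ is the identity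 of $\mathbb{Z}_m$, and $m$ is the auto-order of $\varphi$. For a divisor $m$ of $n$, ''$\varphi$ taken modulo $m$'' is the map $x \bmod m\mapsto \varphi(x)\bmod m$ on $\mathbb{Z}_m$ (when well defined). *)

From mathcomp Require Import all_boot.
Set Implicit Arguments. Unset Strict Implicit. Unset Printing Implicit Defensive.

(* Convention: Z_n is represented by the naturals {0,...,n-1} with addition
   modulo n; a map of Z_n is a function f : nat -> nat of which only the
   values on {0,...,n-1} matter. *)

Definition is_skew (n : nat) (f : nat -> nat) : Prop :=
  [/\ (forall x, x < n -> f x < n),
      (forall x y, x < n -> y < n -> f x = f y -> x = y),  (* injective => permutation *)
      f 0 = 0 &
      (forall a, a < n -> exists i : nat, forall b, b < n ->
          f ((a + b) %% n) = (f a + iter i f b) %% n)].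

Definition is_id (n : nat) (f : nat -> nat) : bool :=
  all (fun x => f x == x) (iota 0 n).

(* ord(f) = order of <f>: the least k >= 1 with f^k = id on Z_n.
   (For a permutation of an n-element set, the order is at most n`!.) *)
Definition ordf (n : nat) (f : nat -> nat) : nat :=
  (find (fun k => is_id n (iter k.+1 f)) (iota 0 n`!)).+1.

(* pi_f(a): the (unique) i in {1,...,ord f - 1} with
   f(a+b) = f(a) + f^i(b) for all b; equal to 1 if f is the identity. *)
Definition pif (n : nat) (f : nat -> nat) (a : nat) : nat :=
  if is_id n f then 1 else
  (find (fun i => all (fun b => f ((a + b) %% n) == (f a + iter i.+1 f b) %% n)
                      (iota 0 n))
        (iota 0 (ordf n f).-1)).+1.

Definition sigmaf (n : nat) (f : nat -> nat) (x y : nat) : nat :=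
  (\sum_(i < x) pif n f (iter i f y)) %% ordf n f.

(* The derived skew morphism f' of Z_{ord f}: f'(a) = sigma_f(a, 1). *)
Definition derived (p : nat * (nat -> nat)) : nat * (nat -> nat) :=
  (ordf p.1 p.2, fun a => sigmaf p.1 p.2 a (1 %% p.1)).

Definition derived_iter (k : nat) (n : nat) (f : nat -> nat) : nat * (nat -> nat) :=
  iter k derived (n, f).

(* c is the complexity of f (n >= 2): f^(c) acts on a non-trivial Z_m
   and f^(c+1) acts on Z_1. *)
Definition complexity_is (n : nat) (f : nat -> nat) (c : nat) : Prop :=
  2 <= (derived_iter c n f).1 /\ (derived_iter c.+1 n f).1 = 1.

Definition auto_order (n : nat) (f : nat -> nat) (c : nat) : nat :=
  (derived_iter c n f).1.

From mathcomp Require Import all_boot fingroup perm.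
Set Implicit Arguments. Unset Strict Implicit. Unset Printing Implicit Defensive.

(* Write f' for the derived skew morphism and pi_f for the power function.
   Modulo ord f, pi_f(x) is the image of 1 under f'^x; dually, modulo ord f',
   pi_f'(a) is f^a(1).  Chaining the two, f^a(1) modulo ord f' is the image of 1
   under f''^a.  Since ord f' divides n (because f'^n = 1), if f'' is the
   identity modulo some d | ord f' then f^a(1) = 1 mod d for all a, and the
   skew relation f(x + 1) = f(x) + f^(pi_f(x))(1) gives f(x) = x mod d.  With c
   even, descend from the identity f^(c) two derivations at a time, d being the
   auto-order. *)

Lemma is_idP n (h : nat -> nat) : reflect (forall x, x < n -> h x = x) (is_id n h).
Proof.
apply: (iffP allP) => [h_id x xn | h_id x].
  by apply/eqP/h_id; rewrite mem_iota.
by rewrite mem_iota add0n => /andP[_ xn]; apply/eqP/h_id.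
Qed.

Lemma find_iota (P : pred nat) N i : i < N -> P i ->
  let j := find P (iota 0 N) in
  [/\ j <= i, P j & forall k, k < j -> ~~ P k].
Proof.
move=> iN Pi j.
have hasPN : has P (iota 0 N) by apply/hasP; exists i; rewrite ?mem_iota.
have jN : j < N by rewrite -(size_iota 0 N) -has_find.
split.
- rewrite leqNgt; apply/negP => /(before_find 0).
  by rewrite nth_iota // Pi.
- by have := nth_find 0 hasPN; rewrite nth_iota.
- move=> k kj; have := before_find 0 kj.
  by rewrite nth_iota ?(ltn_trans kj jN) // add0n => ->.
Qed.

Lemma modnDl_inj n a x y : x < n -> y < n -> (a + x) %% n = (a + y) %% n -> x = y.
Proof. by move=> xn yn /eqP; rewrite eqn_modDl !modn_small // => /eqP. Qed.

Lemma modnDr_inj n a x y : x < n -> y < n -> (x + a) %% n = (y + a) %% n -> x = y.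
Proof. by rewrite !(addnC _ a); apply: modnDl_inj. Qed.

Lemma iter_id_mod N d (h : nat -> nat) :
  (forall y, y < N -> h y < N) -> (forall y, y < N -> h y = y %[mod d]) ->
  forall k y, y < N -> iter k h y = y %[mod d].
Proof.
move=> h_lt h_mod k y yN.
have iter_lt j : iter j h y < N by elim: j => //= j; apply: h_lt.
by elim: k => //= k IH; rewrite h_mod.
Qed.

Definition is_perm (n : nat) (f : nat -> nat) : Prop :=
  (forall x, x < n -> f x < n) /\ (forall x y, x < n -> y < n -> f x = f y -> x = y).

Lemma ordf_eq1 n f : ordf n f = 1 -> forall x, x < n -> f x = x.
Proof.
rewrite /ordf -(prednK (fact_gt0 n)) /=.
by case: ifP => // /is_idP.
Qed.

Section Order.
Variables (n : nat) (f : nat -> nat).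
Hypothesis fP : is_perm n f.

Local Notation m := (ordf n f).

Lemma iter_lt k x : x < n -> iter k f x < n.
Proof. by move=> xn; elim: k => //= k; apply: fP.1. Qed.

Lemma period_exists : exists2 k, 0 < k <= n`! & forall x, x < n -> iter k f x = x.
Proof.
have f_inj : injective (fun i : 'I_n => Ordinal (fP.1 _ (ltn_ord i))).
  by move=> i j [/(fP.2 _ _ (ltn_ord i) (ltn_ord j)) /val_inj].
pose s := perm f_inj.
have val_s k (i : 'I_n) : val ((s ^+ k)%g i) = iter k f i.
  elim: k => [|k IH]; first by rewrite expg0 perm1.
  by rewrite expgSr permM permE /= IH.
exists #[s]%g.
  rewrite order_gt0 dvdn_leq ?fact_gt0 // -card_Sn -cardsT.
  exact/cardSg/subsetT.
by move=> x xn; rewrite -(val_s _ (Ordinal xn)) expg_order perm1.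
Qed.

Lemma ordf_spec :
  is_id n (iter m f) /\ forall k, 0 < k < m -> ~~ is_id n (iter k f).
Proof.
have [k /andP[k_gt0 k_le] k_id] := period_exists.
have k'_lt : k.-1 < n`! by rewrite prednK.
have k'_id : is_id n (iter k.-1.+1 f) by rewrite prednK //; apply/is_idP.
have [_ m_id before] := @find_iota (fun j => is_id n (iter j.+1 f)) _ _ k'_lt k'_id.
split => // j /andP[j_gt0 jm]; rewrite -(prednK j_gt0); apply: before.
by rewrite -ltnS prednK.
Qed.

Lemma iter_ordf x : x < n -> iter m f x = x.
Proof. exact/is_idP/ordf_spec.1. Qed.

Lemma iter_mulm q x : x < n -> iter (q * m) f x = x.
Proof. by move=> xn; elim: q => // q IH; rewrite mulSn iterD IH iter_ordf. Qed.

Lemma iter_modf k x : x < n -> iter k f x = iter (k %% m) f x.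
Proof. by move=> xn; rewrite {1}(divn_eq k m) addnC iterD iter_mulm. Qed.

Lemma ordf_dvd k : (forall x, x < n -> iter k f x = x) -> m %| k.
Proof.
move=> k_id; rewrite /dvdn; apply/negPn/negP => r_gt0.
have /negP[] : ~~ is_id n (iter (k %% m) f).
  by apply: ordf_spec.2; rewrite lt0n r_gt0 ltn_pmod.
by apply/is_idP => x xn; rewrite -iter_modf // k_id.
Qed.

Lemma eq_iter_modf j k : (forall x, x < n -> iter j f x = iter k f x) -> j = k %[mod m].
Proof.
wlog jk : j k / j <= k.
  move=> W jk_eq; case: (leqP j k) => [|/ltnW] h; first exact: W.
  by symmetry; apply: W => // x xn; rewrite jk_eq.
move=> jk_eq; suff /dvdnP[q kj_eq] : m %| k - j by rewrite -(subnK jk) kj_eq modnMDl.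
apply: ordf_dvd => y yn.
have pre_y : iter j f (iter (m * j - j) f y) = y.
  by rewrite -iterD subnKC ?leq_pmull // mulnC iter_mulm.
by rewrite -{1}pre_y -iterD subnK // -jk_eq ?iter_lt.
Qed.
End Order.

Lemma skew_is_perm n f : is_skew n f -> is_perm n f.
Proof. by case. Qed.

Section Skew.
Variables (n : nat) (f : nat -> nat).
Hypotheses (n_gt0 : 0 < n) (fS : is_skew n f).

Let fP : is_perm n f := skew_is_perm fS.
Local Notation m := (ordf n f).
Local Notation pi := (pif n f).

Lemma skew0 : f 0 = 0. Proof. by case: fS. Qed.

Lemma iter_skew0 k : iter k f 0 = 0.
Proof. by elim: k => //= k ->; rewrite skew0. Qed.

Lemma skew_translation_id a : a < n ->
  (forall b, b < n -> f ((a + b) %% n) = (f a + b) %% n) -> forall x, x < n -> f x = x.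
Proof.
move=> an fa_transl; set a' := (n - a) %% n.
have a'n : a' < n by rewrite ltn_pmod.
have aa' : (a + a') %% n = 0 by rewrite modnDmr subnKC ?(ltnW an) // modnn.
have fa : f a = a.
  apply: (@modnDr_inj n a') => //; first exact: fP.1.
  by rewrite -fa_transl // aa' skew0.
move=> x xn; have xa : (x + (a + a')) %% n = x by rewrite -modnDmr aa' addn0 modn_small.
have := fa_transl ((x + a') %% n) (ltn_pmod _ n_gt0).
by rewrite fa !modnDmr addnCA xa.
Qed.

Lemma skew_exponent a : a < n ->
  exists i, forall b, b < n -> f ((a + b) %% n) = (f a + iter i f b) %% n.
Proof. by case: fS => _ _ _; apply. Qed.

Lemma pifP a b : a < n -> b < n -> f ((a + b) %% n) = (f a + iter (pi a) f b) %% n.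
Proof.
move=> an bn; rewrite /pif; case: ifP => [/is_idP f_id | f_nid].
  by rewrite /= !f_id // ltn_pmod.
have [i fa_skew] := skew_exponent an.
pose Q j := all (fun c => f ((a + c) %% n) == (f a + iter j.+1 f c) %% n) (iota 0 n).
(* pif only searches the exponents 1 <= j < ord f. *)
have i_gt0 : 0 < i %% m.
  rewrite lt0n; apply: contraFN f_nid => /eqP i0; apply/is_idP.
  by apply: (skew_translation_id an) => c cn; rewrite fa_skew // (iter_modf fP) // i0.
have i_lt : (i %% m).-1 < m.-1 by rewrite -ltnS !prednK ?ltn_pmod.
have Qi : Q (i %% m).-1.
  rewrite /Q prednK //; apply/allP => c; rewrite mem_iota => /andP[_ cn].
  by rewrite fa_skew // (iter_modf fP).
have [_ /allP Qj _] := @find_iota Q _ _ i_lt Qi.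
by apply/eqP/Qj; rewrite mem_iota.
Qed.

Definition pi_sum k y := \sum_(i < k) pi (iter i f y).

Lemma pi_sum0 y : pi_sum 0 y = 0.
Proof. by rewrite /pi_sum big_ord0. Qed.

Lemma pi_sumS k y : pi_sum k.+1 y = pi_sum k y + pi (iter k f y).
Proof. by rewrite /pi_sum big_ord_recr. Qed.

Lemma pi_sumD k l y : pi_sum (k + l) y = pi_sum k y + pi_sum l (iter k f y).
Proof.
elim: l => [|l IH]; first by rewrite addn0 pi_sum0 addn0.
by rewrite addnS !pi_sumS IH -addnA -iterD (addnC l).
Qed.

Lemma iter_skew k a b : a < n -> b < n ->
  iter k f ((a + b) %% n) = (iter k f a + iter (pi_sum k a) f b) %% n.
Proof.
move=> an bn; elim: k => [|k IH]; first by rewrite pi_sum0.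
by rewrite !iterS IH pifP ?(iter_lt fP) // pi_sumS (addnC (pi_sum k a)) iterD.
Qed.

Lemma ordf_dvd_pi_sum a : a < n -> m %| pi_sum m a.
Proof.
move=> an; apply: (ordf_dvd fP) => b bn.
apply: (@modnDl_inj n a) => //; first exact: iter_lt.
by have := iter_skew m an bn; rewrite !(iter_ordf fP) ?ltn_pmod // => ->.
Qed.

Lemma pi_sum_modf k y : y < n -> pi_sum k y = pi_sum (k %% m) y %[mod m].
Proof.
move=> yn; have pi_sum_mulm q : pi_sum (q * m) y = 0 %[mod m].
  elim: q => [|q IH]; first by rewrite pi_sum0.
  rewrite mulSn pi_sumD (iter_ordf fP) // -modnDm IH.
  by rewrite (eqP (ordf_dvd_pi_sum yn)).
by rewrite {1}(divn_eq k m) pi_sumD (iter_mulm fP) // -modnDml pi_sum_mulm.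
Qed.

Lemma pifD a b : a < n -> b < n -> pi ((a + b) %% n) = pi_sum (pi a) b %[mod m].
Proof.
move=> an bn; have abn : (a + b) %% n < n by rewrite ltn_pmod.
apply: (eq_iter_modf fP) => c cn.
apply: (@modnDl_inj n (f ((a + b) %% n))); try exact: iter_lt.
have shift : ((a + b) %% n + c) %% n = (a + (b + c) %% n) %% n.
  by rewrite modnDml modnDmr addnA.
rewrite -pifP // shift pifP ?ltn_pmod // iter_skew // pifP //.
by rewrite modnDmr modnDml addnA.
Qed.

Lemma pif0 : pi 0 = 1 %[mod m].
Proof.
apply: (eq_iter_modf fP) => b bn /=.
have := pifP n_gt0 bn.
by rewrite skew0 !add0n !modn_small ?(iter_lt fP) // => <-.
Qed.

Lemma pi_sum_at0 k : pi_sum k 0 = k %[mod m].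
Proof.
have -> : pi_sum k 0 = k * pi 0.
  by elim: k => [|k IH]; rewrite ?pi_sum0 // pi_sumS IH iter_skew0 mulSnr.
by rewrite -modnMmr pif0 modnMmr muln1.
Qed.

Lemma pi_sumDr k a b : a < n -> b < n ->
  pi_sum k ((a + b) %% n) = pi_sum (pi_sum k a) b %[mod m].
Proof.
move=> an bn; elim: k => [|k IH]; first by rewrite !pi_sum0.
rewrite pi_sumS -modnDm IH iter_skew // pifD ?(iter_lt fP) // modnDm.
by rewrite -pi_sumD -pi_sumS.
Qed.

Local Notation f' := (derived (n, f)).2.

Lemma derivedE k : f' k = pi_sum k (1 %% n) %% m.
Proof. by []. Qed.

Lemma pi_sum_iter_derived k x : x < n -> pi_sum k x %% m = iter x f' (k %% m).
Proof.
elim: x => [|x IH] xn; first by rewrite pi_sum_at0.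
have x1 : (x + 1 %% n) %% n = x.+1 by rewrite modnDmr addn1 modn_small.
rewrite -[in LHS]x1 pi_sumDr ?ltn_pmod ?(ltnW xn) // pi_sum_modf ?ltn_pmod //.
by rewrite IH ?(ltnW xn).
Qed.

Lemma iter_derived_n k : k < m -> iter n f' k = k.
Proof.
move=> km; have n1 : n.-1 < n by rewrite prednK.
rewrite -[n in iter n](prednK n_gt0) iterS -{1}(modn_small km) -pi_sum_iter_derived //.
have n1_1 : (n.-1 + 1 %% n) %% n = 0 by rewrite modnDmr addn1 prednK // modnn.
rewrite derivedE -pi_sum_modf ?ltn_pmod // -pi_sumDr ?ltn_pmod //.
by rewrite n1_1 pi_sum_at0 modn_small.
Qed.

Lemma derived_skewE a b : a < m -> b < m ->
  f' ((a + b) %% m) = (f' a + iter (iter a f (1 %% n)) f' b) %% m.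
Proof.
move=> am bm; have un : 1 %% n < n by rewrite ltn_pmod.
have := pi_sum_iter_derived b (iter_lt fP a un); rewrite (modn_small bm) => <-.
by rewrite !derivedE -pi_sum_modf ?ltn_pmod // modnDm -pi_sumD.
Qed.

Lemma derived_is_skew : is_skew m f'.
Proof.
split.
- by move=> x _; rewrite derivedE ltn_pmod.
- move=> x y xm ym fxy.
  rewrite -(iter_derived_n xm) -(iter_derived_n ym).
  by rewrite -[n in iter n _ x](prednK n_gt0) -[n in iter n _ y](prednK n_gt0) !iterSr fxy.
- by rewrite derivedE pi_sum0 mod0n.
by move=> a am; exists (iter a f (1 %% n)) => b bm; apply: derived_skewE.
Qed.

Lemma pif_iter_derived x : x < n -> pi x %% m = iter x f' (1 %% m).
Proof.
move=> xn; have := pifD n_gt0 xn; rewrite add0n (modn_small xn) => ->.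
by rewrite pi_sum_iter_derived // pif0.
Qed.

Lemma id_mod_of_orbit1 d : d %| n -> (forall a, iter a f (1 %% n) = 1 %[mod d]) ->
  forall x, x < n -> f x = x %[mod d].
Proof.
move=> dn orbit1; elim=> [|x IH] xn; first by rewrite skew0.
have x1 : (x + 1 %% n) %% n = x.+1 by rewrite modnDmr addn1 modn_small.
rewrite -{1}x1 pifP ?ltn_pmod ?(ltnW xn) // (modn_dvdm _ dn) -modnDm IH ?(ltnW xn) //.
by rewrite orbit1 modnDm addn1.
Qed.
End Skew.

Lemma ordf_gt0 n f : 0 < ordf n f. Proof. by []. Qed.

Lemma ordf_derived_dvd n f : 0 < n -> is_skew n f -> (derived (derived (n, f))).1 %| n.
Proof.
move=> n_gt0 fS; apply: (ordf_dvd (skew_is_perm (derived_is_skew n_gt0 fS))).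
exact: iter_derived_n.
Qed.

Lemma pif_derived n f a : 0 < n -> is_skew n f -> a < ordf n f ->
  pif (derived (n, f)).1 (derived (n, f)).2 a
    = iter a f (1 %% n) %[mod (derived (derived (n, f))).1].
Proof.
move=> n_gt0 fS am; have gS := derived_is_skew n_gt0 fS.
apply: (eq_iter_modf (skew_is_perm gS)) => b bm.
apply: (@modnDl_inj _ ((derived (n, f)).2 a)); try exact: (iter_lt (skew_is_perm gS)).
by rewrite -(pifP (ordf_gt0 n f) gS am bm) derived_skewE.
Qed.

Lemma orbit1_derived2 n f a : 0 < n -> is_skew n f -> a < ordf n f ->
  let p := derived (derived (n, f)) in iter a f (1 %% n) %% p.1 = iter a p.2 (1 %% p.1).
Proof.
move=> n_gt0 fS am /=; rewrite -pif_derived //.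
exact: (pif_iter_derived (ordf_gt0 n f) (derived_is_skew n_gt0 fS) am).
Qed.

Definition skew_pair (p : nat * (nat -> nat)) : Prop := 0 < p.1 /\ is_skew p.1 p.2.

Definition id_mod (d : nat) (p : nat * (nat -> nat)) : Prop :=
  d %| p.1 /\ forall x, x < p.1 -> p.2 x = x %[mod d].

Lemma skew_pair_derived p : skew_pair p -> skew_pair (derived p).
Proof. by case: p => n f [n_gt0 fS]; split; [exact: ordf_gt0 | exact: derived_is_skew]. Qed.

Lemma id_mod_derived2 d p : skew_pair p -> id_mod d (derived (derived p)) -> id_mod d p.
Proof.
case: p => n f pS; have [n_gt0 fS] := pS.
have [q_gt0 /skew_is_perm qP] := skew_pair_derived (skew_pair_derived pS).
case=> dq q_id; have dn := dvdn_trans dq (ordf_derived_dvd n_gt0 fS).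
split => //=; apply: id_mod_of_orbit1 => // a.
rewrite (iter_modf (skew_is_perm fS)) ?ltn_pmod // -(modn_dvdm _ dq).
rewrite orbit1_derived2 ?ltn_pmod // (iter_id_mod qP.1 q_id) ?ltn_pmod //.
exact: modn_dvdm.
Qed.

Lemma id_mod_derived_double k d p :
  skew_pair p -> id_mod d (iter k.*2 derived p) -> id_mod d p.
Proof.
elim: k p => // k IH p pS; rewrite doubleS !iterSr => q_id.
by apply: id_mod_derived2 => //; apply: IH q_id; do 2 apply: skew_pair_derived.
Qed.

Theorem lemma4p2 (n : nat) (f : nat -> nat) (c : nat) :
  2 <= n -> is_skew n f -> complexity_is n f c -> ~~ odd c ->
  let m := auto_order n f c in
  m %| n /\ (forall x, x < n -> f x = x %[mod m]).
Proof.
move=> n_ge2 fS [_ c1] c_even /=.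
have c_eq : c = c./2.*2 by rewrite -{1}(odd_double_half c) (negbTE c_even).
suff : id_mod (auto_order n f c) (n, f) by [].
apply: (@id_mod_derived_double c./2); first by split => //; apply: ltnW.
rewrite -c_eq; split; first exact: dvdnn.
by move: c1; rewrite /derived_iter iterS /= => /ordf_eq1 q_id x /q_id ->.
Qed.
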